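(* Let $(G,\mathcal{B}_1,\mathcal{B}_2)$ be a Rota-Baxter system of groups with cocycle $\Phi$. For every $t\in G$, let $\Phi_t$ be the restriction of $\Phi$ to $G_t$. Then $\operatorname{Im}(\Phi_t)=\operatorname{Im}(\Phi)=G_{1_G}$ for every $t\in G$, and $\Phi_{1_G}:G_{1_G}\to G_{1_G}$ is a bijection.
   Context: A Rota-Baxter system of groups is a triple $(G,\mathcal{B}_1,\mathcal{B}_2)$ where $G$ is a group with identity $1_G$ and $\mathcal{B}_1,\mathcal{B}_2:G\to G$ are maps such that for all $a,b\in G$: $\mathcal{B}_1(a)\mathcal{B}_1(b)=\mathcal{B}_1(\mathcal{B}_1(a)b\mathcal{B}_2(a))$ and $\mathcal{B}_2(b)\mathcal{B}_2(a)=\mathcal{B}_2(\mathcal{B}_1(a)b\mathcal{B}_2(a))$. Descendent operation: $a\circ b=\mathcal{B}_1(a)b\mathcal{B}_2(a)$; cocycle: $\Phi(a)=\mathcal{B}_1(a)\mathcal{B}_2(a)$. For $t\in G$: $e_t=\mathcal{B}_1(t)^{-1}t\mathcal{B}_2(t)^{-1}$ and $G_t=\{a\in G\mid a\circ e_t=a\}$. *)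

From HB Require Import structures.
From mathcomp Require Import all_boot.
From mathcomp Require Import monoid.

Set Implicit Arguments.
Unset Strict Implicit.
Unset Printing Implicit Defensive.

Local Open Scope group_scope.

Section RBS.
Variable G : groupType.

Definition is_RBsystem (B1 B2 : G -> G) : Prop :=
  forall a b : G,
    B1 a * B1 b = B1 (B1 a * b * B2 a) /\
    B2 b * B2 a = B2 (B1 a * b * B2 a).

Definition rbs_circ (B1 B2 : G -> G) (a b : G) : G := B1 a * b * B2 a.

Definition rbs_Phi (B1 B2 : G -> G) (a : G) : G := B1 a * B2 a.

Definition rbs_e (B1 B2 : G -> G) (t : G) : G := (B1 t)^-1 * t * (B2 t)^-1.

Definition rbs_Gt (B1 B2 : G -> G) (t : G) : G -> Prop :=
  fun a => rbs_circ B1 B2 a (rbs_e B1 B2 t) = a.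

End RBS.

(* The descendent operation o is associative, each left
   translation a o _ is a bijection of G (with inverse
   x |-> B1(a)^-1 x B2(a)^-1), e_t is a right identity for t and a left
   identity for all of G, and Phi(a) = a o 1.  Hence G_t is the set of a with
   e_a = e_t, a |-> a o e_t maps G onto G_t without changing Phi, and Phi
   restricted to G_1 has inverse x |-> x o d, where 1 o d = e_1. *)
From HB Require Import structures.
From mathcomp Require Import all_boot.
From mathcomp Require Import monoid.

Set Implicit Arguments.
Unset Strict Implicit.
Unset Printing Implicit Defensive.

Local Open Scope group_scope.

Section RotaBaxterSystem.
Variable G : groupType.
Variables B1 B2 : G -> G.

Definition rbs_ldiv (a x : G) : G := (B1 a)^-1 * x * (B2 a)^-1.

Local Notation "a 'o' b" := (rbs_circ B1 B2 a b) (at level 40, left associativity).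
Local Notation e := (rbs_e B1 B2).
Local Notation Phi := (rbs_Phi B1 B2).
Local Notation Gt := (rbs_Gt B1 B2).

Lemma rbs_circ_ldiv a x : a o rbs_ldiv a x = x.
Proof. by rewrite /rbs_circ /rbs_ldiv !mulgA mulgV mul1g mulgVK. Qed.

Lemma rbs_circI a : injective (rbs_circ B1 B2 a).
Proof. by move=> x y; rewrite /rbs_circ => /mulIg /mulgI. Qed.

Lemma rbs_circ_er t : t o e t = t.
Proof. exact: rbs_circ_ldiv. Qed.

Lemma rbs_GtE t a : Gt t a <-> e a = e t.
Proof.
rewrite /rbs_Gt; split=> [hGt|<-]; last exact: rbs_circ_er.
by apply: (@rbs_circI a); rewrite hGt rbs_circ_er.
Qed.

Lemma rbs_PhiE a : Phi a = a o 1.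
Proof. by rewrite /rbs_Phi /rbs_circ mulg1. Qed.

Hypothesis rbs : is_RBsystem B1 B2.

Lemma rbs_circA a b x : (a o b) o x = a o (b o x).
Proof. by rewrite /rbs_circ -(proj1 (rbs a b)) -(proj2 (rbs a b)) !mulgA. Qed.

Lemma rbs_B1_e t : B1 (e t) = 1.
Proof.
apply: (mulgI (B1 t)); rewrite mulg1.
by have [-> _] := rbs t (e t); rewrite [B1 t * _ * _]rbs_circ_er.
Qed.

Lemma rbs_B2_e t : B2 (e t) = 1.
Proof.
apply: (mulIg (B2 t)); rewrite mul1g.
by have [_ ->] := rbs t (e t); rewrite [B1 t * _ * _]rbs_circ_er.
Qed.

Lemma rbs_circ_el t x : e t o x = x.
Proof. by rewrite /rbs_circ rbs_B1_e rbs_B2_e mul1g mulg1. Qed.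

Lemma rbs_e_idem t : e (e t) = e t.
Proof. by apply/rbs_GtE; apply: rbs_circ_el. Qed.

Lemma rbs_e_circ a b : e (a o b) = e b.
Proof. by apply/rbs_GtE; rewrite /rbs_Gt rbs_circA rbs_circ_er. Qed.

Lemma rbs_Gt_circ_e t a : Gt t (a o e t).
Proof. by rewrite /rbs_Gt rbs_circA rbs_circ_el. Qed.

Lemma rbs_Phi_circ_e t a : Phi (a o e t) = Phi a.
Proof. by rewrite !rbs_PhiE rbs_circA rbs_circ_el. Qed.

Lemma rbs_Phi_Gt1 a : Gt 1 (Phi a).
Proof. by apply/rbs_GtE; rewrite rbs_PhiE rbs_e_circ. Qed.

Definition rbs_d : G := rbs_ldiv 1 (e 1).

Lemma rbs_circ1d : 1 o rbs_d = e 1.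
Proof. exact: rbs_circ_ldiv. Qed.

Lemma rbs_circd1 : rbs_d o 1 = e 1.
Proof.
apply: (@rbs_circI 1).
by rewrite -rbs_circA rbs_circ1d rbs_circ_el rbs_circ_er.
Qed.

Lemma rbs_Gt1_circ_d y : Gt 1 (y o rbs_d).
Proof. by apply/rbs_GtE; rewrite rbs_e_circ -[RHS]rbs_e_idem -rbs_circ1d rbs_e_circ. Qed.

Lemma rbs_Phi_circ_d y : Gt 1 y -> Phi (y o rbs_d) = y.
Proof. by move=> hy; rewrite rbs_PhiE rbs_circA rbs_circd1. Qed.

Lemma rbs_circ_d_Phi a : Gt 1 a -> Phi a o rbs_d = a.
Proof. by move=> ha; rewrite rbs_PhiE rbs_circA rbs_circ1d. Qed.

End RotaBaxterSystem.

Theorem proposition4p4 (G : groupType) (B1 B2 : G -> G) :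
  is_RBsystem B1 B2 ->
  (* Im(Phi_t) = Im(Phi) for every t *)
  (forall (t y : G),
     (exists a : G, rbs_Gt B1 B2 t a /\ rbs_Phi B1 B2 a = y) <->
     (exists a : G, rbs_Phi B1 B2 a = y)) /\
  (* Im(Phi) = G_{1} *)
  (forall y : G, (exists a : G, rbs_Phi B1 B2 a = y) <-> rbs_Gt B1 B2 1 y) /\
  (* Phi_{1} : G_{1} -> G_{1} is a bijection *)
  ((forall a : G, rbs_Gt B1 B2 1 a -> rbs_Gt B1 B2 1 (rbs_Phi B1 B2 a)) /\
   (forall a b : G, rbs_Gt B1 B2 1 a -> rbs_Gt B1 B2 1 b ->
      rbs_Phi B1 B2 a = rbs_Phi B1 B2 b -> a = b) /\
   (forall y : G, rbs_Gt B1 B2 1 y ->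
      exists a : G, rbs_Gt B1 B2 1 a /\ rbs_Phi B1 B2 a = y)).
Proof.
move=> rbs; have Phi_onto_Gt1 y : rbs_Gt B1 B2 1 y ->
    exists a, rbs_Gt B1 B2 1 a /\ rbs_Phi B1 B2 a = y.
  move=> hy; exists (rbs_circ B1 B2 y (rbs_d B1 B2)).
  by split; [apply: rbs_Gt1_circ_d | apply: rbs_Phi_circ_d].
split; [|split; [|split; [|split]]] => //.
- move=> t y; split=> [[a [_ <-]]|[a <-]]; first by exists a.
  exists (rbs_circ B1 B2 a (rbs_e B1 B2 t)).
  by split; [apply: rbs_Gt_circ_e | apply: rbs_Phi_circ_e].
- move=> y; split=> [[a <-]|/Phi_onto_Gt1 [a [_ <-]]]; last by exists a.
  exact: rbs_Phi_Gt1.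
- by move=> a _; apply: rbs_Phi_Gt1.
- move=> a b ha hb hPhi.
  by rewrite -(rbs_circ_d_Phi rbs ha) hPhi rbs_circ_d_Phi.
Qed.
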